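(* (a) If $S$ is a discrete semigroup with $S^2\neq S$, then $\ell^1(S)$ is not super weakly amenable. (b) Let $S=\{t,0\}$ with multiplication $t0=0t=t^2=0^2=0$. Then $\ell^1(S)$ is semiweakly amenable but not super weakly amenable.
   Context: $\ell^1(S)$ is the semigroup algebra with convolution $\delta_s*\delta_u=\delta_{su}$; $S^2=\{su:s,u\in S\}$. $\mathcal A^*$ is the dual $\mathcal A$-bimodule ($\langle x,a\cdot f\rangle=\langle xa,f\rangle$, $\langle x,f\cdot a\rangle=\langle ax,f\rangle$). A derivation $D:\mathcal A\to X$ is a bounded linear map with $D(ab)=D(a)\cdot b+a\cdot D(b)$; it is inner if $D(a)=a\cdot x-x\cdot a$ for some $x\in X$. $\mathcal A$ is semiweakly amenable if every derivation $D:\mathcal A\to\mathcal A^*$ with $\langle D(a),b\rangle+\langle D(b),a\rangle=0$ for all $a,b$ is inner. For a continuous homomorphism $\varphi:\mathcal A\to\mathcal B$, $\mathcal B_\varphi$ is $\mathcal B$ with $a\cdot b=\varphi(a)b$, $b\cdot a=b\varphi(a)$, and $\mathcal B_\varphi^*$ its dual bimodule. $\mathcal A$ is super weakly amenable if for every Banach algebra $\mathcal B$, every continuous homomorphism $\varphi:\mathcal A\to\mathcal B$ and every derivation $d:\mathcal A\to\mathcal B_\varphi^*$, $\langle d(a),\varphi(b)\rangle+\langle d(b),\varphi(a)\rangle=0$ for all $a,b$. *)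

From HB Require Import structures.
From mathcomp Require Import all_boot all_order all_algebra finmap.
From mathcomp Require Import complex.
From mathcomp Require Import all_classical all_reals topology normedtype.

Set Implicit Arguments.
Unset Strict Implicit.
Unset Printing Implicit Defensive.
Import Order.TTheory GRing.Theory Num.Theory.
Import numFieldNormedType.Exports.
Local Open Scope classical_set_scope.
Local Open Scope ring_scope.

HB.instance Definition _ (R : rcfType) := NormedModule.copy R[i] (R[i])^o.

Record semigroup := Semigroup {
  sg_car :> choiceType;
  sg_op : sg_car -> sg_car -> sg_car;
  sg_opA : associative sg_op }.

Definition sg_square (S : semigroup) : set S :=
  [set x | exists u v, sg_op u v = x].
Arguments sg_square : clear implicits.

Definition totally {I : choiceType} : set_system {fset I} :=
  filter_from setT (fun A => [set B | (A `<=` B)%fset]).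

#[global] Instance totally_filter {I : choiceType} : ProperFilter (@totally I).
Proof.
eapply filter_from_proper; last by move=> A _; exists A; rewrite /= fsubset_refl.
apply: filter_fromT_filter; first by exists fset0.
by move=> A B /=; exists (A `|` B)%fset => P /=; rewrite fsubUset => /andP[].
Qed.

Section L1.
Variable R : realType.
Local Notation C := R[i].

Definition partial_sum {I : choiceType} (x : I -> C) (A : {fset I}) : C :=
  \sum_(i : A) x (val i).

Definition gsum {I : choiceType} (x : I -> C) : C :=
  lim (partial_sum x @ totally).

Definition l1 {I : choiceType} (a : I -> C) : Prop :=
  exists M : C, forall A : {fset I}, partial_sum (fun i => `|a i|) A <= M.

Definition l1norm {I : choiceType} (a : I -> C) : C := gsum (fun i => `|a i|).

(* convolution product of l^1(S): delta_s * delta_u = delta_(su) *)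
Definition conv (S : semigroup) (a b : S -> C) : S -> C :=
  fun s => gsum (fun p : S * S => if sg_op p.1 p.2 == s then a p.1 * b p.2 else 0).

Record banach_algebra := BanachAlgebra {
  ba_car :> completeNormedModType C;
  ba_mul : ba_car -> ba_car -> ba_car;
  ba_mulA : associative ba_mul;
  ba_mulDl : forall x y z, ba_mul (x + y) z = ba_mul x z + ba_mul y z;
  ba_mulDr : forall x y z, ba_mul x (y + z) = ba_mul x y + ba_mul x z;
  ba_mulZl : forall (k : C) x y, ba_mul (k *: x) y = k *: ba_mul x y;
  ba_mulZr : forall (k : C) x y, ba_mul x (k *: y) = k *: ba_mul x y;
  ba_norm_mul : forall x y, `|ba_mul x y| <= `|x| * `|y| }.

Section Defs.
Variable S : semigroup.

Definition l1_cont_hom (B : banach_algebra) (phi : (S -> C) -> B) : Prop :=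
  [/\ forall (k : C) a b, l1 a -> l1 b ->
        phi (fun s => k * a s + b s) = k *: phi a + phi b,
      forall a b, l1 a -> l1 b -> phi (conv a b) = ba_mul (phi a) (phi b) &
      exists M : C, forall a, l1 a -> `|phi a| <= M * l1norm a].

(* bounded derivation  d : l^1(S) -> B_phi^*,  where
   <x, a.f> = f (x phi(a)),  <x, f.a> = f (phi(a) x);
   d a is represented as the functional  x |-> <x, d a>  on B. *)
Definition l1_derivation_dual_phi (B : banach_algebra) (phi : (S -> C) -> B)
    (d : (S -> C) -> B -> C) : Prop :=
  [/\ forall a, l1 a -> forall (k : C) (x y : B), d a (k *: x + y) = k * d a x + d a y,
      forall (k : C) a b, l1 a -> l1 b -> forall x : B,
        d (fun s => k * a s + b s) x = k * d a x + d b x,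
      exists M : C, forall a, l1 a -> forall x : B, `|d a x| <= M * l1norm a * `|x| &
      forall a b, l1 a -> l1 b -> forall x : B,
        d (conv a b) x = d a (ba_mul (phi b) x) + d b (ba_mul x (phi a))].

Definition l1_super_weakly_amenable : Prop :=
  forall (B : banach_algebra) (phi : (S -> C) -> B) (d : (S -> C) -> B -> C),
    l1_cont_hom phi -> l1_derivation_dual_phi phi d ->
    forall a b, l1 a -> l1 b -> d a (phi b) + d b (phi a) = 0.

Definition l1_dual_elt (f : (S -> C) -> C) : Prop :=
  (forall (k : C) a b, l1 a -> l1 b -> f (fun s => k * a s + b s) = k * f a + f b)
  /\ exists M : C, forall a, l1 a -> `|f a| <= M * l1norm a.

(* bounded derivation  D : l^1(S) -> l^1(S)^*  (dual bimodule):
   <x, a.f> = f (x a),  <x, f.a> = f (a x); D a is the functional x |-> <x, D a>. *)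
Definition l1_derivation_dual (D : (S -> C) -> (S -> C) -> C) : Prop :=
  [/\ forall a, l1 a -> forall (k : C) x y, l1 x -> l1 y ->
        D a (fun s => k * x s + y s) = k * D a x + D a y,
      forall (k : C) a b, l1 a -> l1 b -> forall x, l1 x ->
        D (fun s => k * a s + b s) x = k * D a x + D b x,
      exists M : C, forall a x, l1 a -> l1 x -> `|D a x| <= M * l1norm a * l1norm x &
      forall a b x, l1 a -> l1 b -> l1 x ->
        D (conv a b) x = D a (conv b x) + D b (conv x a)].

Definition l1_semiweakly_amenable : Prop :=
  forall D : (S -> C) -> (S -> C) -> C,
    l1_derivation_dual D ->
    (forall a b, l1 a -> l1 b -> D a b + D b a = 0) ->
    exists f : (S -> C) -> C, l1_dual_elt f /\
      forall a x, l1 a -> l1 x -> D a x = f (conv x a) - f (conv a x).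

End Defs.
End L1.

(* The semigroup S = {t, 0} with t0 = 0t = t^2 = 0^2 = 0;
   encoded on bool with t := true and 0 := false. *)
Definition tz_t : bool := true.
Definition tz_0 : bool := false.
Definition tz_op (x y : bool) : bool := tz_0.
Lemma tz_opA : associative tz_op. Proof. by []. Qed.
Definition tz_semigroup : semigroup := @Semigroup bool tz_op tz_opA.

From HB Require Import structures.
From mathcomp Require Import all_boot all_order all_algebra finmap.
From mathcomp Require Import complex.
From mathcomp Require Import all_classical all_reals topology normedtype.
From mathcomp Require Import lra.
Set Implicit Arguments.
Unset Strict Implicit.
Unset Printing Implicit Defensive.
Import Order.TTheory GRing.Theory Num.Theory.
Import numFieldNormedType.Exports.
Local Open Scope classical_set_scope.
Local Open Scope ring_scope.
Local Open Scope complex_scope.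

(* (a) Pick s0 outside S^2. Every convolution product vanishes at s0, so
   phi a := a s0 is a homomorphism from l^1(S) into C with the zero product;
   as both module actions of that algebra on its dual vanish, d a x := a s0 x
   is a derivation, yet d(delta_s0)(phi delta_s0) = 1, so the symmetric sum
   at a = b = delta_s0 is 2, not 0.
   (b) On S = {t, 0}, delta_0 is an idempotent with
   delta_0 * x = x * delta_0 = (x t + x 0) delta_0. For a skew derivation D,
   D(delta_0) x = D(delta_0)(delta_0 * x) + D(delta_0)(x * delta_0) is a
   multiple of D(delta_0)(delta_0) = 0; skewness then kills D(delta_t) on
   delta_0 and on delta_t, so D = 0, which is inner. *)

Section ComplexComplete.
Variable R : realType.
Local Notation C := R[i].

Lemma ReB (x y : C) : complex.Re (x - y) = complex.Re x - complex.Re y.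
Proof. by case: x y => [? ?] [? ?]. Qed.

Lemma ImB (x y : C) : complex.Im (x - y) = complex.Im x - complex.Im y.
Proof. by case: x y => [? ?] [? ?]. Qed.

Lemma normcR (x : R) : `|x%:C| = `|x|%:C :> C.
Proof. by rewrite normc_def /= expr0n addr0 sqrtr_sqr. Qed.

Lemma normc_i : `|'i| = 1 :> C.
Proof. by rewrite normc_def /= expr0n expr1n add0r sqrtr1. Qed.

Lemma normc_ge_Im (z : C) : `|complex.Im z|%:C <= `|z|.
Proof.
by have := normc_ge_Re (z * 'i); rewrite ReiNIm normrN normrM normc_i mulr1.
Qed.

Lemma normc_le_ReIm (z : C) : `|z| <= (`|complex.Re z| + `|complex.Im z|)%:C.
Proof.
rewrite [z in `|z|]complexE rmorphD /= -!normcR.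
by apply: le_trans (ler_normD _ _) _; rewrite normrM normc_i mul1r.
Qed.

Lemma cauchy_contraction (f : C -> R) (F : set_system C) : ProperFilter F ->
  (forall x y, `|f x - f y|%:C <= `|x - y|) -> cauchy F -> cauchy (f @ F).
Proof.
move=> FF f1 /cauchyP Fc; apply: cauchy_exP => e e0.
have [|x Fx] := Fc e%:C; first by rewrite ltcR.
exists (f x); suff : F [set y | ball (f x) e (f y)] by [].
apply: filterS Fx => y xy.
by rewrite /ball /= -ltcR; exact: le_lt_trans (f1 x y) xy.
Qed.

Lemma complex_complete (F : set_system C) : ProperFilter F -> cauchy F -> cvg F.
Proof.
move=> FF Fc.
have ReE (x y : C) : `|complex.Re x - complex.Re y|%:C <= `|x - y|.
  by rewrite -ReB normc_ge_Re.
have ImE (x y : C) : `|complex.Im x - complex.Im y|%:C <= `|x - y|.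
  by rewrite -ImB normc_ge_Im.
have /R_complete cRe := cauchy_contraction FF ReE Fc.
have /R_complete cIm := cauchy_contraction FF ImE Fc.
apply/cvg_ex; exists (lim (@complex.Re R @ F) +i* lim (@complex.Im R @ F)).
apply/cvgrPdist_lt => e e0.
have [/eqP Ie Re0] : complex.Im e == 0 /\ 0 < complex.Re e.
  by move: e0; rewrite ltcE => /andP[].
have e20 : 0 < complex.Re e / 2 by rewrite divr_gt0.
move/cvgrPdist_lt : cRe => /(_ _ e20) hRe.
move/cvgrPdist_lt : cIm => /(_ _ e20) hIm.
near=> x; apply: le_lt_trans (normc_le_ReIm _) _.
have h1 : `|lim (@complex.Re R @ F) - complex.Re x| < complex.Re e / 2 by near: x.
have h2 : `|lim (@complex.Im R @ F) - complex.Im x| < complex.Re e / 2 by near: x.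
rewrite ReB ImB ltcE /= Ie eqxx /= [X in _ < X](splitr (complex.Re e)).
by rewrite ltrD.
Unshelve. all: by end_near.
Qed.

End ComplexComplete.

HB.instance Definition _ (R : realType) :=
  Uniform_isComplete.Build R[i] (@complex_complete R).

Lemma ler_psum_fsubset (T : numDomainType) (I : choiceType) (F : I -> T)
    (A B : {fset I}) :
  (forall i, 0 <= F i) -> (A `<=` B)%fset ->
  \sum_(i <- A) F i <= \sum_(i <- B) F i.
Proof.
move=> F0 sAB.
have -> : \sum_(i <- A) F i = \sum_(i <- B) (if i \in A then F i else 0).
  rewrite -(big_fset_incl _ sAB) => [|i _ /negbTE -> //].
  by apply: eq_big_seq => i ->.
by apply: ler_sum => i _; case: ifP.
Qed.

Section Summation.
Variable R : realType.
Local Notation C := R[i].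

Lemma partial_sumE (I : choiceType) (x : I -> C) (A : {fset I}) :
  partial_sum x A = \sum_(i <- A) x i.
Proof. by rewrite /partial_sum big_seq_fsetE. Qed.

Lemma gsum_finite_support (I : choiceType) (f : I -> C) (A : {fset I}) :
  (forall i, i \notin A -> f i = 0) -> gsum f = \sum_(i <- A) f i.
Proof.
move=> fA; rewrite /gsum; apply: norm_lim_near_cst.
exists A => // B /= sAB; rewrite partial_sumE.
by apply/esym/big_fset_incl => // i _; apply: fA.
Qed.

Lemma l1_finite_support (I : choiceType) (a : I -> C) (A : {fset I}) :
  (forall i, i \notin A -> a i = 0) -> l1 a.
Proof.
move=> aA; exists (\sum_(i <- A) `|a i|) => B; rewrite partial_sumE.
rewrite (big_fset_incl _ (fsubsetUr B A)); last first.
  by move=> i _ iA; rewrite aA ?normr0.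
by apply: ler_psum_fsubset => //; exact: fsubsetUl.
Qed.

Section L1Norm.
Variables (I : choiceType) (a : I -> C).
Let r (A : {fset I}) := complex.Re (partial_sum (fun i => `|a i|) A).

Let rE A : partial_sum (fun i => `|a i|) A = (r A)%:C.
Proof. by rewrite RRe_real // partial_sumE; apply/ger0_real/sumr_ge0. Qed.

Let r_mono A B : (A `<=` B)%fset -> r A <= r B.
Proof. by rewrite -lecR -!rE !partial_sumE; exact: ler_psum_fsubset. Qed.

Let r_has_sup : l1 a -> has_sup (range r).
Proof.
move=> [M aM]; split; first by exists (r fset0), fset0.
by exists (complex.Re M) => _ [A _ <-]; move: (aM A); rewrite rE lecE => /andP[].
Qed.

Lemma l1_partial_sum_cvg : l1 a ->
  partial_sum (fun i => `|a i|) @ totally --> (sup (range r))%:C.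
Proof.
move=> /r_has_sup r_sup.
apply/cvgrPdist_lt => e e0.
have eE : e = (complex.Re e)%:C by rewrite RRe_real // gtr0_real.
have Re_e0 : 0 < complex.Re e by rewrite -ltcR -eE.
have [_ [A _ <-] rA] := sup_adherent Re_e0 r_sup.
exists A => // B /= sAB.
have rB : r B <= sup (range r) by apply: sup_upper_bound => //; exists B.
rewrite rE -rmorphB /= normcR eE ltcR ger0_norm ?subr_ge0 //.
by move: (r_mono sAB) rA; lra.
Qed.

Lemma l1norm_ge_norm : l1 a -> forall i, `|a i| <= l1norm a.
Proof.
move=> la i; rewrite /l1norm /gsum (norm_cvg_lim (l1_partial_sum_cvg la)).
have -> : `|a i| = (r [fset i]%fset)%:C by rewrite -rE partial_sumE big_seq_fset1.
by rewrite lecR; apply: sup_upper_bound; [exact: r_has_sup | exists [fset i]%fset].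
Qed.

End L1Norm.

End Summation.

Definition null_banach_algebra (R : realType) : banach_algebra R.
Proof.
refine (@BanachAlgebra R R[i] (fun _ _ => 0) _ _ _ _ _ _) => //.
- by move=> *; rewrite addr0.
- by move=> *; rewrite addr0.
- by move=> *; rewrite scaler0.
- by move=> *; rewrite scaler0.
- by move=> x y; rewrite normr0 mulr_ge0.
Defined.

Section SquareNotFull.
Variables (R : realType) (S : semigroup) (s0 : S).
Hypothesis s0_notin_square : ~ sg_square S s0.
Local Notation C := R[i].

Lemma conv_notin_square (a b : S -> C) : conv a b s0 = 0.
Proof.
rewrite /conv (gsum_finite_support (A := fset0)) ?big_seq_fset0 // => -[u v] _ /=.
by case: eqP => // uv; case: s0_notin_square; exists u, v.
Qed.

Let delta : S -> C := fun s => if s == s0 then 1 else 0.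

Let l1_delta : l1 delta.
Proof.
apply: (l1_finite_support (A := [fset s0]%fset)) => s.
by rewrite inE /delta => /negbTE ->.
Qed.

Lemma not_super_weakly_amenable_of_notin_square : ~ l1_super_weakly_amenable R S.
Proof.
move=> swa.
pose phi (a : S -> C) : null_banach_algebra R := a s0.
pose d (a : S -> C) (x : null_banach_algebra R) : C := a s0 * x.
have phi_hom : l1_cont_hom phi.
  split=> [//|a b _ _|]; first by rewrite /phi conv_notin_square.
  by exists 1 => a la; rewrite mul1r; exact: l1norm_ge_norm.
have d_der : l1_derivation_dual_phi phi d.
  split=> [a _ k x y|k a b _ _ x||a b _ _ x].
  - by rewrite /d mulrDr mulrCA.
  - by rewrite /d mulrDl mulrA.
  - exists 1 => a x la; rewrite /d normrM mul1r ler_wpM2r //.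
    exact: l1norm_ge_norm.
  - by rewrite /d conv_notin_square !mulr0 mul0r addr0.
have := swa _ phi d phi_hom d_der delta delta l1_delta l1_delta.
by rewrite /d /phi /delta eqxx mulr1 => /eqP; rewrite -mulr2n pnatr_eq0.
Qed.

End SquareNotFull.

Lemma not_super_weakly_amenable_of_square_neq (R : realType) (S : semigroup) :
  sg_square S <> setT -> ~ l1_super_weakly_amenable R S.
Proof.
move=> SS; have [s0 s0_notin] : exists s0, ~ sg_square S s0.
  by apply/existsNP => S2; apply: SS; apply/seteqP; split=> // s _; exact: S2.
exact: not_super_weakly_amenable_of_notin_square s0_notin.
Qed.

Lemma self_add_eq0 (V : zmodType) (x : V) : x = x + x -> x = 0.
Proof. by move=> xx; apply/(addrI x); rewrite -xx addr0. Qed.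

Section TwoElementSemigroup.
Variable R : realType.
Local Notation C := R[i].
Local Notation S := tz_semigroup.

Lemma l1_tz (a : S -> C) : l1 a.
Proof.
by apply: (l1_finite_support (A := [fset true; false]%fset)) => -[]; rewrite !inE.
Qed.

Lemma conv_tz (a b : S -> C) :
  conv a b = fun s => if s then 0 else (a true + a false) * (b true + b false).
Proof.
apply/funext => -[]; rewrite /conv.
  by rewrite (gsum_finite_support (A := fset0)) ?big_seq_fset0.
rewrite (gsum_finite_support (A := ((true, true) |` ((true, false) |`
  ((false, true) |` [fset (false, false)])))%fset)).
  by rewrite !big_fsetU1 ?inE // big_seq_fset1 /= mulrDl !mulrDr !addrA.
by move=> [[] []]; rewrite !inE.
Qed.

Section SkewDerivation.
Variable D : (S -> C) -> (S -> C) -> C.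
Hypothesis D_der : l1_derivation_dual D.
Hypothesis D_skew : forall a b, l1 a -> l1 b -> D a b + D b a = 0.

Let z : S -> C := fun _ => 0.
Let dt : S -> C := fun s => if s then 1 else 0.
Let d0 : S -> C := fun s => if s then 0 else 1.

Let D_linl k a b x : D (fun s => k * a s + b s) x = k * D a x + D b x.
Proof. by case: D_der => _ linl _ _; rewrite linl //; apply: l1_tz. Qed.

Let D_linr a k x y : D a (fun s => k * x s + y s) = k * D a x + D a y.
Proof. by case: D_der => linr _ _ _; rewrite linr //; apply: l1_tz. Qed.

Let z_lin : z = (fun s => 1 * z s + z s).
Proof. by apply/funext => s; rewrite /z mul1r addr0. Qed.

Let D_zl x : D z x = 0.
Proof. by apply/self_add_eq0; rewrite [in LHS]z_lin D_linl mul1r. Qed.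

Let D_zr a : D a z = 0.
Proof. by apply/self_add_eq0; rewrite [in LHS]z_lin D_linr mul1r. Qed.

Let D_diag a : D a a = 0.
Proof. by have /eqP := D_skew (l1_tz a) (l1_tz a); rewrite -mulr2n mulrn_eq0 => /eqP. Qed.

Let tz_decomp (x : S -> C) : x = fun s => x true * dt s + (x false * d0 s + z s).
Proof. by apply/funext => -[]; rewrite /dt /d0 /z ?mulr1 ?mulr0 ?addr0 ?add0r. Qed.

Let D_d0 x : D d0 x = 0.
Proof.
have d0_central y : conv d0 y = fun s => (y true + y false) * d0 s + z s.
  rewrite conv_tz; apply/funext => -[];
  by rewrite /d0 /z ?mulr0 ?addr0 ?add0r ?mul1r ?mulr1.
have d0_centralC y : conv y d0 = conv d0 y.
  by rewrite !conv_tz; apply/funext => -[] //; rewrite mulrC.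
have d0_idem : conv d0 d0 = d0.
  by rewrite conv_tz; apply/funext => -[]; rewrite /d0 // add0r mulr1.
case: D_der => _ _ _ Dconv.
rewrite -d0_idem Dconv; try exact: l1_tz.
by rewrite d0_centralC d0_central D_linr D_diag D_zr mulr0 !addr0.
Qed.

Let D_dt x : D dt x = 0.
Proof.
have D_dt_d0 : D dt d0 = 0 by have := D_skew (l1_tz dt) (l1_tz d0); rewrite D_d0 addr0.
by rewrite (tz_decomp x) !D_linr D_diag D_dt_d0 D_zr !mulr0 !addr0.
Qed.

Lemma tz_skew_derivation_eq0 a x : D a x = 0.
Proof. by rewrite (tz_decomp a) !D_linl D_dt D_d0 D_zl !mulr0 !addr0. Qed.

End SkewDerivation.

Lemma tz_semiweakly_amenable : l1_semiweakly_amenable R S.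
Proof.
move=> D D_der D_skew; exists (fun _ => 0); split.
  split=> [k a b _ _|]; first by rewrite mulr0 addr0.
  by exists 0 => a _; rewrite normr0 mul0r.
by move=> a x _ _; rewrite subrr tz_skew_derivation_eq0.
Qed.

End TwoElementSemigroup.

Lemma tz_square_neq : sg_square tz_semigroup <> setT.
Proof.
move=> S2; have : sg_square tz_semigroup tz_t by rewrite S2.
by case=> u [v].
Qed.

Theorem mainTheorem13 :
  (forall (R : realType) (S : semigroup),
      sg_square S <> setT -> ~ l1_super_weakly_amenable R S) /\
  (forall R : realType,
      l1_semiweakly_amenable R tz_semigroup /\
      ~ l1_super_weakly_amenable R tz_semigroup).
Proof.
split; first exact: not_super_weakly_amenable_of_square_neq.
move=> R; split; first exact: tz_semiweakly_amenable.
exact: not_super_weakly_amenable_of_square_neq tz_square_neq.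
Qed.
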